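(* Let $\tau\subset\mathbb{Z}^4_{\ge0}$ be a B-facet containing a point $Q$ with exactly one nonzero coordinate such that $\tau\setminus\{Q\}$ has dimension $2$. Then $\tau$ is a $B_1$-facet, or a $B_2$-facet, or a flat border.
   Context: A $k$-simplex is a set of $k+1$ affinely independent points; a $k$-simplex $S\subset\mathbb{Z}^n_{\ge0}$ is a B-simplex if there is an index $i$ with exactly $k$ vertices in $\{x_i=0\}$ and the remaining vertex having $x_i=1$. Dimension of a finite set means dimension of its affine span. A B-facet in $\mathbb{Z}^n_{\ge0}$ is a finite set $\tau\subset\mathbb{Z}^n_{\ge0}$ whose affine span is a hyperplane $\{\langle a,x\rangle=b\}$ with all $a_j>0$, such that every $(n-1)$-simplex with vertices in $\tau$ is a B-simplex. For $\tau\subset\mathbb{Z}^4_{\ge0}$: $\tau$ is a $B_1$-facet if for some $i$ exactly one point has nonzero $x_i$, with $x_i=1$; a $B_2$-facet if for some distinct $i,j$ all $x\in\tau$ have $(x_i,x_j)\in\{(0,0),(1,0),(0,1)\}$; a flat border if there are distinct $i,j$ and $C\in\tau$ with $C_i=C_j=1$ such that $\tau$ contains at least two distinct points with $x_i=x_j=0$ and every point of $\tau$ other than $C$ lies in $\{x_i=0\}\cup\{x_j=0\}$. *)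

From HB Require Import structures.
From mathcomp Require Import all_boot all_order all_algebra.
From mathcomp Require Import finmap.
Set Implicit Arguments. Unset Strict Implicit. Unset Printing Implicit Defensive.
Import Order.TTheory GRing.Theory Num.Theory.
Local Open Scope ring_scope.
Local Open Scope fset_scope.

Definition pt (n : nat) := 'rV[nat]_n.

Definition coord n (x : pt n) (i : 'I_n) : nat := x ord0 i.

Definition ptQ n (x : pt n) : 'rV[rat]_n := map_mx (fun k : nat => (k%:R : rat)) x.

Definition in_aff_span n (S : {fset pt n}) (y : 'rV[rat]_n) : Prop :=
  exists c : pt n -> rat,
    (\sum_(x <- S) c x = 1)%R /\ y = (\sum_(x <- S) c x *: ptQ x)%R.

(* Dimension of a (nonempty) finite set = dimension of its affine span
   = rank of the differences x - x0 for a fixed x0 in S. *)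
Definition affdim n (S : {fset pt n}) : nat :=
  \rank (\matrix_(k < size (enum_fset S), j < n)
           (ptQ (nth (const_mx 0%N) (enum_fset S) k) ord0 j
            - ptQ (nth (const_mx 0%N) (enum_fset S) 0%N) ord0 j)%R).

Definition is_simplex n (k : nat) (S : {fset pt n}) : Prop :=
  #|` S| = k.+1 /\ affdim S = k.

Definition is_B_simplex n (k : nat) (S : {fset pt n}) : Prop :=
  is_simplex k S /\
  exists i : 'I_n,
    #|` [fset x in S | coord x i == 0%N]| = k /\
    (forall x, x \in S -> coord x i != 0%N -> coord x i = 1%N).

Definition is_B_facet n (tau : {fset pt n}) : Prop :=
  (exists (a : 'rV[rat]_n) (b : rat),
      (forall j, 0 < a ord0 j)%R /\
      (forall y : 'rV[rat]_n,
          in_aff_span tau y <-> (\sum_(j < n) a ord0 j * y ord0 j = b)%R)) /\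
  (forall S : {fset pt n}, S `<=` tau -> is_simplex n.-1 S -> is_B_simplex n.-1 S).

Definition is_B1_facet (tau : {fset pt 4}) : Prop :=
  exists i : 'I_4,
    #|` [fset x in tau | coord x i != 0%N]| = 1 /\
    (forall x, x \in tau -> coord x i != 0%N -> coord x i = 1%N).

Definition is_B2_facet (tau : {fset pt 4}) : Prop :=
  exists i j : 'I_4, i != j /\
    (forall x, x \in tau ->
       (coord x i, coord x j) \in [:: (0, 0); (1, 0); (0, 1)]%N).

Definition is_flat_border (tau : {fset pt 4}) : Prop :=
  exists (i j : 'I_4) (C : pt 4),
    [/\ i != j, C \in tau, coord C i = 1%N /\ coord C j = 1%N,
        (2 <= #|` [fset x in tau | (coord x i == 0%N) && (coord x j == 0%N)]|)%N
      & forall x, x \in tau -> x != C ->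
          (coord x i == 0%N) || (coord x j == 0%N)].

Definition nnz n (x : pt n) : nat := #|[set i : 'I_n | coord x i != 0%N]|.

From HB Require Import structures.
From mathcomp Require Import all_boot all_order all_algebra.
From mathcomp Require Import finmap.
From mathcomp Require Import ring lra zify.
From Stdlib Require Import Classical.
Set Implicit Arguments. Unset Strict Implicit. Unset Printing Implicit Defensive.
Import Order.TTheory GRing.Theory Num.Theory.
Local Open Scope fset_scope.
Local Open Scope ring_scope.

(* Write Q = q e_l and P = tau \ Q.  The span of tau is a hyperplane with positive normal,
   and Q lies outside the 2-dimensional affine span of P; hence forgetting the coordinate l
   is injective on P and turns every linear relation between three points of P into an
   affine one.  A triple X, Y, Z of P that is linearly independent in the remaining
   coordinates spans a 3-simplex together with Q; being a B-simplex, it takes the values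
   0, 0, 1 on some coordinate.  If that coordinate is l, all of P lies in {x_l = 0} and tau
   is a B1-facet.  Otherwise the conclusion follows from a case analysis on which "axis
   points" (points of P vanishing at two of the three other coordinates) exist, and on
   whether two "edge points" (vanishing at exactly one of them) can share their zero. *)

Definition coordQ n (x : pt n) (i : 'I_n) : rat := (coord x i)%:R.

Lemma ptQE n (x : pt n) j : ptQ x ord0 j = coordQ x j.
Proof. by rewrite /ptQ mxE. Qed.

Section CoordQ.
Variables (n : nat) (x y : pt n) (i : 'I_n).

Lemma coordQ0 : coord x i = 0%N -> coordQ x i = 0.
Proof. by rewrite /coordQ => ->. Qed.
Lemma coordQ1 : coord x i = 1%N -> coordQ x i = 1.
Proof. by rewrite /coordQ => ->. Qed.
Lemma coordQ_ge0 : 0 <= coordQ x i.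
Proof. by rewrite /coordQ ler0n. Qed.
Lemma coordQ_ge1 : coord x i <> 0%N -> 1 <= coordQ x i.
Proof. move=> h; rewrite /coordQ ler1n; lia. Qed.
Lemma coordQ_eq0 : coordQ x i = 0 -> coord x i = 0%N.
Proof. by rewrite /coordQ => /eqP; rewrite pnatr_eq0 => /eqP. Qed.
Lemma coordQ_inj : coordQ x i = coordQ y i -> coord x i = coord y i.
Proof. by rewrite /coordQ => /eqP; rewrite eqr_nat => /eqP. Qed.

End CoordQ.

Lemma neq_of_coord n (x y : pt n) i : coord x i <> coord y i -> x <> y.
Proof. by move=> h e; apply: h; rewrite e. Qed.

Lemma sum_only1 (R : nmodType) (I : finType) (i : I) (F : I -> R) :
  (forall j, j != i -> F j = 0) -> \sum_j F j = F i.
Proof. by move=> h; rewrite (bigD1 i) //= big1 ?addr0 // => j /h. Qed.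

Lemma cardfs_seq (T : choiceType) (S : {fset T}) (s : seq T) :
  uniq s -> S =i s -> #|` S| = size s.
Proof. by move=> us eS; apply: perm_size; apply: uniq_perm => //; apply: fset_uniq. Qed.

Lemma card_fsep_seq (T : choiceType) (S : {fset T}) (p : pred T) (s : seq T) :
  uniq s -> S =i s -> #|` [fset x in S | p x]| = count p s.
Proof.
move=> us eS; rewrite -size_filter; apply: perm_size; apply: uniq_perm.
- exact: fset_uniq.
- exact: filter_uniq.
- by move=> x; rewrite !inE mem_filter eS andbC.
Qed.

Lemma addmxN_sub (F : fieldType) m1 m2 n (A B : 'M[F]_(m1, n)) (C : 'M_(m2, n)) :
  (A <= C)%MS -> (B <= C)%MS -> (A - B <= C)%MS.
Proof. by move=> hA hB; rewrite addmx_sub // eqmx_opp. Qed.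

Section DiffMatrix.
Variable n : nat.
Implicit Type S : {fset pt n}.

Definition basept S := nth (const_mx 0%N) (enum_fset S) 0.

Definition diffmx S := \matrix_(k < size (enum_fset S), j < n)
  (ptQ (nth (const_mx 0%N) (enum_fset S) k) ord0 j - ptQ (basept S) ord0 j).

Lemma affdimE S : affdim S = \rank (diffmx S).
Proof. by []. Qed.

Lemma diffmx_row S x : x \in S -> (ptQ x - ptQ (basept S) <= diffmx S)%MS.
Proof.
move=> hx; have hk : (index x (enum_fset S) < size (enum_fset S))%N by rewrite index_mem.
by apply: (eq_row_sub (Ordinal hk)); apply/rowP => j; rewrite !mxE /= nth_index.
Qed.

Lemma basept_in S x : x \in S -> basept S \in S.
Proof.
move=> hx; apply/mem_nth/(leq_ltn_trans (leq0n (index x (enum_fset S)))).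
by rewrite index_mem.
Qed.

Lemma diffmx_sub S x y : x \in S -> y \in S -> (ptQ x - ptQ y <= diffmx S)%MS.
Proof.
move=> hx hy.
have -> : ptQ x - ptQ y = (ptQ x - ptQ (basept S)) - (ptQ y - ptQ (basept S)).
  by apply/rowP => j; rewrite !mxE; ring.
by apply: addmxN_sub; apply: diffmx_row.
Qed.

Lemma diffmx_le S m (V : 'M[rat]_(m, n)) :
  (forall x, x \in S -> (ptQ x - ptQ (basept S) <= V)%MS) -> (diffmx S <= V)%MS.
Proof.
move=> h; apply/row_subP => k.
have -> : row k (diffmx S) = ptQ (nth (const_mx 0%N) (enum_fset S) k) - ptQ (basept S).
  by apply/rowP => j; rewrite !mxE.
by apply/h/mem_nth.
Qed.

End DiffMatrix.

Lemma rank2_rows (F : fieldType) m n (D : 'M[F]_(m, n)) : \rank D = 2%N ->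
  exists k1 k2, row k1 D != 0 /\ ~~ (row k2 D <= row k1 D)%MS.
Proof.
move=> hr; have [k1 hk1] : exists k1, row k1 D != 0.
  apply: NNPP => hno.
  have D0 : D = 0.
    apply/row_matrixP => i; rewrite row0.
    by apply: NNPP => nz; apply: hno; exists i; apply/eqP.
  by move: hr; rewrite D0 mxrank0.
exists k1; apply: NNPP => hno.
have sD : (D <= row k1 D)%MS.
  by apply/row_subP => k; apply: NNPP => h; apply: hno; exists k; split=> //; apply/negP.
by have := leq_trans (mxrankS sD) (rank_leq_row (row k1 D)); rewrite hr.
Qed.

Section OffCoordinate.
Variable l : 'I_4.

Definition lin_indep (X Y Z : pt 4) := forall al be ga : rat,
  (forall i, i != l -> al * coordQ X i + be * coordQ Y i + ga * coordQ Z i = 0) ->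
  [/\ al = 0, be = 0 & ga = 0].

Definition unit_pattern (i : 'I_4) (X Y Z : pt 4) : Prop :=
  [\/ [/\ coord X i = 0%N, coord Y i = 0%N & coord Z i = 1%N],
      [/\ coord X i = 0%N, coord Y i = 1%N & coord Z i = 0%N] |
      [/\ coord X i = 1%N, coord Y i = 0%N & coord Z i = 0%N]].

Lemma lin_indep_swap12 X Y Z : lin_indep X Y Z -> lin_indep Y X Z.
Proof.
move=> H al be ga h; have [] := H be al ga; last by move=> -> -> ->.
by move=> i hi; rewrite -(h i hi); ring.
Qed.

Lemma lin_indep_swap23 X Y Z : lin_indep X Y Z -> lin_indep X Z Y.
Proof.
move=> H al be ga h; have [] := H al ga be; last by move=> -> -> ->.
by move=> i hi; rewrite -(h i hi); ring.
Qed.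

Lemma lin_indep_neq12 X Y Z : lin_indep X Y Z -> X <> Y.
Proof.
move=> H e; subst Y; have [] := H 1 (-1) 0; first by move=> i _; ring.
by move=> /eqP; rewrite oner_eq0.
Qed.

Lemma lin_indep_neq13 X Y Z : lin_indep X Y Z -> X <> Z.
Proof. by move=> /lin_indep_swap23 /lin_indep_neq12. Qed.

Lemma lin_indep_neq23 X Y Z : lin_indep X Y Z -> Y <> Z.
Proof. by move=> /lin_indep_swap12 /lin_indep_swap23 /lin_indep_neq12. Qed.

Definition others (a b c : 'I_4) := uniq [:: l; a; b; c].

Lemma others_cases a b c m : others a b c -> m != l -> [\/ m = a, m = b | m = c].
Proof.
move=> h3 hm; have : m \in [:: l; a; b; c].
  have [_ ->] := uniq_min_size h3 (fun x _ => mem_enum 'I_4 x) (eq_leq (size_enum_ord 4)).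
  by rewrite mem_enum.
by rewrite !inE (negbTE hm) /= => /or3P[] /eqP ->; [exact: Or31 | exact: Or32 | exact: Or33].
Qed.

Lemma othersP a b c : reflect
  ([/\ a != l, b != l & c != l] /\ [/\ a != b, a != c & b != c]) (others a b c).
Proof.
rewrite /others /= !inE !negb_or !(eq_sym l) !andbT.
apply: (iffP and3P) => [[/and3P[? ? ?] /andP[? ?] ?] | [[? ? ?] [? ? ?]]] //.
by split; [apply/and3P | apply/andP | ].
Qed.

Lemma others_neq a b c : others a b c -> [/\ a != l, b != l & c != l].
Proof. by case/othersP. Qed.

Lemma others_neq12 a b c : others a b c -> a != b.
Proof. by case/othersP=> [? []]. Qed.

Lemma others_swap12 a b c : others a b c -> others b a c.
Proof. by case/othersP=> [[? ? ?] [? ? ?]]; apply/othersP; do 2!split; rewrite // eq_sym. Qed.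
Lemma others_swap23 a b c : others a b c -> others a c b.
Proof. by case/othersP=> [[? ? ?] [? ? ?]]; apply/othersP; do 2!split; rewrite // eq_sym. Qed.
Lemma others_rotl a b c : others a b c -> others b c a.
Proof. by case/othersP=> [[? ? ?] [? ? ?]]; apply/othersP; do 2!split; rewrite // eq_sym. Qed.
Lemma others_rotr a b c : others a b c -> others c a b.
Proof. by case/othersP=> [[? ? ?] [? ? ?]]; apply/othersP; do 2!split; rewrite // eq_sym. Qed.

Lemma others_exist : exists a b c, others a b c.
Proof.
exists (lift l 0), (lift l 1), (lift l 2).
apply/othersP; rewrite !(inj_eq (@lift_inj 4 l)) -!(eq_sym l) !neq_lift.
by do 2!split.
Qed.

Section ProjectedFacet.
Variable P : {fset pt 4}.

(* [P] plays the role of [tau \ Q] seen through the three coordinates other than [l];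
   the hypotheses are the properties of it established in section [Facet]. *)
Hypothesis lin_rel_sum0 : forall X Y Z, X \in P -> Y \in P -> Z \in P -> forall al be ga : rat,
  (forall i, i != l -> al * coordQ X i + be * coordQ Y i + ga * coordQ Z i = 0) -> al + be + ga = 0.
Hypothesis proj_inj : forall X Y, X \in P -> Y \in P ->
  (forall i, i != l -> coord X i = coord Y i) -> X = Y.
Hypothesis lin_indep_span : forall X Y Z, X \in P -> Y \in P -> Z \in P -> lin_indep X Y Z ->
  forall W, W \in P -> exists al be ga : rat, al + be + ga = 1 /\
    forall i, i != l -> coordQ W i = al * coordQ X i + be * coordQ Y i + ga * coordQ Z i.
Hypothesis lin_indep_pattern : forall X Y Z, X \in P -> Y \in P -> Z \in P -> lin_indep X Y Z ->
  exists i, i != l /\ unit_pattern i X Y Z.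
Hypothesis lin_indep_triple : exists X Y Z, [/\ X \in P, Y \in P, Z \in P & lin_indep X Y Z].
Hypothesis coord_cover : forall i, i != l -> exists Y, Y \in P /\ coord Y i <> 0%N.

Lemma lin_indep_pattern3 a b c X Y Z : others a b c ->
  X \in P -> Y \in P -> Z \in P -> lin_indep X Y Z ->
  [\/ unit_pattern a X Y Z, unit_pattern b X Y Z | unit_pattern c X Y Z].
Proof.
move=> h3 hX hY hZ hi; have [m [hm hp]] := lin_indep_pattern hX hY hZ hi.
by case: (others_cases h3 hm) => <-; [exact: Or31 | exact: Or32 | exact: Or33].
Qed.

Ltac case_pattern := case=> [[? ? ?]|[? ? ?]|[? ? ?]]; try congruence.

Lemma pair_lin_indep X Y : X \in P -> Y \in P -> X <> Y -> forall al be : rat,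
  (forall i, i != l -> al * coordQ X i + be * coordQ Y i = 0) -> al = 0 /\ be = 0.
Proof.
move=> hX hY nXY al be H.
have s : al + be + 0 = 0.
  apply: (lin_rel_sum0 hX hY hX) => i hi; rewrite mul0r addr0; exact: H.
have ebe : be = - al by lra.
have al0 : al = 0.
  apply/eqP; apply/negP => /negP anz; apply: nXY; apply: proj_inj => // i hi.
  apply: coordQ_inj; have := H i hi; rewrite ebe => h.
  have : al * (coordQ X i - coordQ Y i) = 0 by rewrite -h; ring.
  move/eqP; rewrite mulf_eq0 (negbTE anz) /= subr_eq0 => /eqP //.
split=> //; lra.
Qed.

Lemma lin_indep_of_coord (k : nat) X Y Z i : X \in P -> Y \in P -> Z \in P -> X <> Y ->
  i != l -> coord X i = k -> coord Y i = k -> coord Z i <> k -> lin_indep X Y Z.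
Proof.
move=> hX hY hZ nXY hi eX eY eZ al be ga H.
have s := lin_rel_sum0 hX hY hZ H.
have Hi := H i hi; rewrite /coordQ eX eY in Hi.
have ga0 : ga = 0.
  have : ga * (coordQ Z i - k%:R) =
      (al * k%:R + be * k%:R + ga * coordQ Z i) - k%:R * (al + be + ga) by ring.
  rewrite Hi s mulr0 subr0 => /eqP; rewrite mulf_eq0 subr_eq0 /coordQ eqr_nat.
  by case/orP=> /eqP.
have [] := pair_lin_indep hX hY nXY (al := al) (be := be).
  by move=> j hj; have := H j hj; rewrite ga0 mul0r addr0.
by move=> -> ->.
Qed.

Lemma collinear_of_dep X Y Z : X \in P -> Y \in P -> Z \in P -> X <> Y -> ~ lin_indep X Y Z ->
  exists t : rat, forall i, i != l -> coordQ Z i = coordQ X i + t * (coordQ Y i - coordQ X i).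
Proof.
move=> hX hY hZ nXY.
rewrite /lin_indep => nind.
have [al nind1] := not_all_ex_not _ _ nind.
have [be nind2] := not_all_ex_not _ _ nind1.
have [ga nind3] := not_all_ex_not _ _ nind2.
have [H nz] := imply_to_and _ _ nind3.
have s := lin_rel_sum0 hX hY hZ H.
have [ga0|gnz] := eqVneq ga 0.
  exfalso; apply: nz.
  have [] := pair_lin_indep hX hY nXY (al := al) (be := be).
    by move=> j hj; have := H j hj; rewrite ga0 mul0r addr0.
  by move=> -> ->.
exists (- be / ga) => i hi.
have Hi := H i hi.
have eal : al = - be - ga by lra.
rewrite eal in Hi.
apply: (mulIf gnz).
have -> : (coordQ X i + - be / ga * (coordQ Y i - coordQ X i)) * ga =
    coordQ X i * ga - be * (coordQ Y i - coordQ X i) by field.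
have : coordQ Z i * ga - (coordQ X i * ga - be * (coordQ Y i - coordQ X i)) =
  (- be - ga) * coordQ X i + be * coordQ Y i + ga * coordQ Z i by ring.
by rewrite Hi => /eqP; rewrite subr_eq0 => /eqP.
Qed.

Lemma coord3_neq0 a b c X : others a b c -> X \in P -> coord X a = 0%N -> coord X b = 0%N ->
  coord X c <> 0%N.
Proof.
move=> h3 hX ea eb ec.
have e : (1 : rat) + 0 + 0 = 0.
  apply: (lin_rel_sum0 hX hX hX) => i hi.
  by case: (others_cases h3 hi) => ->; rewrite /coordQ ?ea ?eb ?ec; ring.
by move: e; rewrite !addr0 => /eqP; rewrite oner_eq0.
Qed.

Lemma eq_on_others a b c X Y : others a b c -> X \in P -> Y \in P ->
  coord X a = coord Y a -> coord X b = coord Y b -> coord X c = coord Y c -> X = Y.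
Proof.
move=> h3 hX hY ea eb ec; apply: proj_inj => // i hi.
by case: (others_cases h3 hi) => ->.
Qed.

Lemma axis_point_uniq a b c X Y : others a b c -> X \in P -> Y \in P ->
  coord X a = 0%N -> coord X b = 0%N -> coord Y a = 0%N -> coord Y b = 0%N -> X = Y.
Proof.
move=> h3 hX hY xa xb ya yb.
have := lin_rel_sum0 hX hY hX (al := coordQ Y c) (be := - coordQ X c) (ga := 0).
have H : forall i, i != l ->
    coordQ Y c * coordQ X i + - coordQ X c * coordQ Y i + 0 * coordQ X i = 0.
  move=> i hi; case: (others_cases h3 hi) => ->; rewrite /coordQ ?xa ?xb ?ya ?yb; ring.
move/(_ H) => e.
apply: (eq_on_others h3) => //; [by rewrite xa ya|by rewrite xb yb|].
apply: coordQ_inj; lra.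
Qed.

Lemma lin_indep_extend X Y : X \in P -> Y \in P -> X <> Y -> exists Z, Z \in P /\ lin_indep X Y Z.
Proof.
move=> hX hY nXY; apply: NNPP => hno.
have hd : forall Z, Z \in P -> ~ lin_indep X Y Z.
  by move=> Z hZ hi; apply: hno; exists Z.
have [A [B [C [hA hB hC hABC]]]] := lin_indep_triple.
have [tA eA] := collinear_of_dep hX hY hA nXY (hd _ hA).
have [tB eB] := collinear_of_dep hX hY hB nXY (hd _ hB).
have [tC eC] := collinear_of_dep hX hY hC nXY (hd _ hC).
have H0 : forall i, i != l ->
    (tB - tC) * coordQ A i + (tC - tA) * coordQ B i + (tA - tB) * coordQ C i = 0.
  by move=> i hi; rewrite eA ?eB ?eC //; ring.
have [h1 h2 _] := hABC _ _ _ H0.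
apply: (lin_indep_neq12 hABC); apply: proj_inj => // i hi; apply: coordQ_inj.
rewrite eA // eB //; have -> : tA = tB by lra. by [].
Qed.

Lemma zero_pair_exists : exists m X X',
  [/\ m != l, X \in P, X' \in P, X <> X' & coord X m = 0%N /\ coord X' m = 0%N].
Proof.
have [A [B [C [hA hB hC hi]]]] := lin_indep_triple.
have [m [hm hp]] := lin_indep_pattern hA hB hC hi.
case: hp => [[h1 h2 _]|[h1 _ h2]|[_ h1 h2]].
- by exists m, A, B; split=> //; exact: lin_indep_neq12 hi.
- by exists m, A, C; split=> //; exact: lin_indep_neq13 hi.
- by exists m, B, C; split=> //; exact: lin_indep_neq23 hi.
Qed.

Lemma full_point_uniq a b c X Y : others a b c -> X \in P -> Y \in P ->
  coord X a <> 0%N -> coord X b <> 0%N -> coord X c <> 0%N ->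
  coord Y a <> 0%N -> coord Y b <> 0%N -> coord Y c <> 0%N -> X = Y.
Proof.
move=> h3 hX hY *; apply: NNPP => nXY.
have [Z [hZ hi]] := lin_indep_extend hX hY nXY.
by case: (lin_indep_pattern3 h3 hX hY hZ hi); case_pattern.
Qed.

(* The three conclusions of the theorem, read on [P]. *)
Definition B1_on := exists i C, [/\ i != l, C \in P, coord C i = 1%N &
  forall Y, Y \in P -> coord Y i <> 0%N -> Y = C].
Definition B2_on := exists i j, [/\ i != l, j != l, i != j &
  forall Y, Y \in P -> (coord Y i = 0%N /\ coord Y j = 0%N) \/
     (coord Y i = 1%N /\ coord Y j = 0%N) \/ (coord Y i = 0%N /\ coord Y j = 1%N)].
Definition flat_on := exists i j C D, (i != l /\ j != l /\ i != j) /\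
  (C \in P /\ coord C i = 1%N /\ coord C j = 1%N) /\
  (D \in P /\ coord D i = 0%N /\ coord D j = 0%N) /\
  forall Y, Y \in P -> Y <> C -> coord Y i = 0%N \/ coord Y j = 0%N.
Definition B_type := B1_on \/ B2_on \/ flat_on.

Lemma B2_on_of_pattern a b Y Y' X : a != l -> b != l -> a != b ->
  Y \in P -> Y' \in P -> X \in P -> lin_indep Y Y' X ->
  coord Y a = 1%N -> coord Y' a = 1%N -> coord X a = 0%N ->
  coord Y b = 0%N -> coord Y' b = 0%N -> coord X b = 1%N -> B2_on.
Proof.
move=> ha hb hab hY hY' hX hi ya y'a xa yb y'b xb.
exists a, b; split=> // W hW.
have [al [be [ga [s e]]]] := lin_indep_span hY hY' hX hi hW.
(* Y, Y' and X satisfy x_a + x_b = 1, hence so do their affine combinations. *)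
have ea := e a ha; have eb := e b hb.
rewrite (coordQ1 ya) (coordQ1 y'a) (coordQ0 xa) in ea.
rewrite (coordQ0 yb) (coordQ0 y'b) (coordQ1 xb) in eb.
have : coordQ W a + coordQ W b = 1 by rewrite ea eb; lra.
rewrite /coordQ -natrD => /eqP; rewrite pnatr_eq1 => /eqP h.
lia.
Qed.

Lemma B_type_of_two_edge_points a b c X X' : others a b c -> X \in P -> X' \in P -> X <> X' ->
  coord X a = 0%N -> coord X' a = 0%N -> coord X b <> 0%N -> coord X c <> 0%N ->
  coord X' b <> 0%N -> coord X' c <> 0%N -> B_type.
Proof.
move=> h3 hX hX' nXX' xa x'a xb xc x'b x'c.
have [ha hb hc] := others_neq h3.
have hab := others_neq12 h3.
have hac := others_neq12 (others_swap23 h3).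
have HY : forall Y, Y \in P -> coord Y a <> 0%N -> coord Y a = 1%N.
  move=> Y hY ya.
  have hi : lin_indep X X' Y.
    exact: (lin_indep_of_coord (k := 0) hX hX' hY nXX' ha xa x'a ya).
  by case: (lin_indep_pattern3 h3 hX hX' hY hi); case_pattern.
have [[Y [Y' [hY [hY' [nYY' [ya y'a]]]]]]|hno] := classic (exists Y Y', Y \in P /\ Y' \in P /\
     Y <> Y' /\ coord Y a <> 0%N /\ coord Y' a <> 0%N).
  have ya1 := HY _ hY ya; have y'a1 := HY _ hY' y'a.
  have hi : lin_indep Y Y' X.
    by apply: (lin_indep_of_coord (k := 1) hY hY' hX nYY' ha ya1 y'a1); rewrite xa.
  right; left; case: (lin_indep_pattern3 h3 hY hY' hX hi); first by case_pattern.
  - case=> [[yb y'b xb1]|[? ? ?]|[? ? ?]]; try congruence.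
    exact: (B2_on_of_pattern ha hb hab hY hY' hX hi ya1 y'a1 xa yb y'b xb1).
  - case=> [[yb y'b xb1]|[? ? ?]|[? ? ?]]; try congruence.
    exact: (B2_on_of_pattern ha hc hac hY hY' hX hi ya1 y'a1 xa yb y'b xb1).
have [Y [hY ya]] := coord_cover ha.
left; exists a, Y; split=> //; first exact: HY.
move=> Z hZ za; apply: NNPP => nZY; apply: hno; exists Z, Y; do !split=> //.
Qed.

(* An axis point of [P] vanishes at two of the coordinates other than [l], an edge point
   at exactly one of them. *)
Definition edge_points_uniq := forall a b c, others a b c -> forall Y Y', Y \in P -> Y' \in P ->
  coord Y a = 0%N -> coord Y' a = 0%N -> coord Y b <> 0%N -> coord Y c <> 0%N ->
  coord Y' b <> 0%N -> coord Y' c <> 0%N -> Y = Y'.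

Definition no_axis_point a b := forall Y, Y \in P -> ~ (coord Y a = 0%N /\ coord Y b = 0%N).

Lemma no_axis_point_sym a b : no_axis_point a b -> no_axis_point b a.
Proof. by move=> h Y hY [h1 h2]; apply: (h Y hY). Qed.

Lemma axis_points_lin_indep a b c Oa Ob Y : others a b c -> Oa \in P -> Ob \in P -> Y \in P ->
  coord Oa b = 0%N -> coord Oa c = 0%N -> coord Ob a = 0%N -> coord Ob c = 0%N ->
  coord Y c <> 0%N -> lin_indep Oa Ob Y.
Proof.
move=> h3 hA hB hY ab ac ba bc yc; have [_ _ hc] := others_neq h3.
apply: (lin_indep_of_coord (k := 0) hA hB hY _ hc ac bc yc).
by apply: (neq_of_coord (i := a)); rewrite ba; apply: coord3_neq0 (others_rotl h3) hA ab ac.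
Qed.

Lemma B1_on_of_axis_points a b c Oa Ob Oc : others a b c -> Oa \in P -> Ob \in P -> Oc \in P ->
  coord Oa b = 0%N -> coord Oa c = 0%N -> coord Ob a = 0%N -> coord Ob c = 0%N ->
  coord Oc a = 0%N -> coord Oc b = 0%N -> coord Oc c = 1%N -> B1_on.
Proof.
move=> h3 hA hB hC ab ac ba bc ca cb cc.
have [ha hb hc] := others_neq h3.
have hi : lin_indep Oa Ob Oc.
  by apply: (axis_points_lin_indep h3 hA hB hC ab ac ba bc); rewrite cc.
exists c, Oc; split=> // Y hY yc.
have [al [be [ga [s e]]]] := lin_indep_span hA hB hC hi hY.
have ea := e a ha; have eb := e b hb; have ec := e c hc.
rewrite (coordQ0 ba) (coordQ0 ca) in ea; rewrite (coordQ0 ab) (coordQ0 cb) in eb.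
rewrite (coordQ0 ac) (coordQ0 bc) (coordQ1 cc) in ec.
(* In Y = al Oa + be Ob + ga Oc the c-coordinate forces ga >= 1, while al, be >= 0. *)
have Oa_a := coordQ_ge1 (coord3_neq0 (others_rotl h3) hA ab ac).
have Ob_b := coordQ_ge1 (coord3_neq0 (others_swap23 h3) hB ba bc).
have al0 : 0 <= al.
  by rewrite -(pmulr_lge0 _ (_ : 0 < coordQ Oa a)); [have := coordQ_ge0 Y a | ]; lra.
have be0 : 0 <= be.
  by rewrite -(pmulr_lge0 _ (_ : 0 < coordQ Ob b)); [have := coordQ_ge0 Y b | ]; lra.
have [al00 be00] : al = 0 /\ be = 0 by have := coordQ_ge1 yc; lra.
apply: (axis_point_uniq h3) => //; apply: coordQ_eq0.
- by rewrite ea al00; ring.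
- by rewrite eb be00; ring.
Qed.

Lemma B_type_of_three_axes a b c Oa Ob Oc : others a b c -> Oa \in P -> Ob \in P -> Oc \in P ->
  coord Oa b = 0%N -> coord Oa c = 0%N -> coord Ob a = 0%N -> coord Ob c = 0%N ->
  coord Oc a = 0%N -> coord Oc b = 0%N -> B_type.
Proof.
move=> h3 hA hB hC ab ac ba bc ca cb; left.
have hi := axis_points_lin_indep h3 hA hB hC ab ac ba bc (coord3_neq0 h3 hC ca cb).
case: (lin_indep_pattern3 h3 hA hB hC hi); case_pattern.
- exact: (B1_on_of_axis_points (others_rotl h3) hB hC hA).
- exact: (B1_on_of_axis_points (others_rotr h3) hC hA hB).
- exact: (B1_on_of_axis_points h3 hA hB hC).
Qed.

Definition two_axes a b c Oa Ob := [/\ others a b c, Oa \in P, Ob \in P,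
  coord Oa b = 0%N /\ coord Oa c = 0%N &
  (coord Ob a = 0%N /\ coord Ob c = 0%N) /\ no_axis_point a b].

Lemma two_axes_swap a b c Oa Ob : two_axes a b c Oa Ob -> two_axes b a c Ob Oa.
Proof.
case=> h3 hA hB [ab ac] [[ba bc] no].
by split=> //; [exact: others_swap12 | split=> //; exact: no_axis_point_sym].
Qed.

Lemma two_axes_coord3 a b c Oa Ob : two_axes a b c Oa Ob -> forall Y, Y \in P -> coord Y c <> 0%N ->
  coord Y c = 1%N \/ (coord Y a = 0%N /\ coord Oa a = 1%N) \/
  (coord Y b = 0%N /\ coord Ob b = 1%N).
Proof.
case=> h3 hA hB [ab ac] [[ba bc] no] Y hY yc.
have aa := coord3_neq0 (others_rotl h3) hA ab ac.
have bb := coord3_neq0 (others_swap23 h3) hB ba bc.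
have hi := axis_points_lin_indep h3 hA hB hY ab ac ba bc yc.
case: (lin_indep_pattern3 h3 hA hB hY hi); case_pattern;
  first [by left | by right; left | by right; right].
Qed.

Lemma two_axes_no_full a b c Oa Ob Y E : two_axes a b c Oa Ob -> Y \in P -> E \in P ->
  coord Y a = 0%N -> coord Y b <> 0%N -> coord Y c <> 0%N ->
  coord E a <> 0%N -> coord E b <> 0%N -> coord E c <> 0%N -> False.
Proof.
move=> ax hY hE ya yb yc ea eb ec.
have H := two_axes_coord3 ax.
case: (ax) => h3 hA hB [ab ac] [[ba bc] no].
have [ha hb hc] := others_neq h3.
have aa := coord3_neq0 (others_rotl h3) hA ab ac.
have ec1 : coord E c = 1%N by case: (H E hE ec) => [//|[[]|[]]].
have ea1 : coord E a = 1%N.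
  have hi : lin_indep Y Ob E.
    apply: (lin_indep_of_coord (k := 0) hY hB hE _ ha ya ba ea).
    by apply: (neq_of_coord (i := c)); rewrite bc.
  by case: (lin_indep_pattern3 h3 hY hB hE hi); case_pattern.
have nind : ~ lin_indep Y Oa E.
  by move=> hi; case: (lin_indep_pattern3 h3 hY hA hE hi); case_pattern.
have nYA : Y <> Oa by apply: (neq_of_coord (i := a)); rewrite ya; apply: nesym.
have [t et] := collinear_of_dep hY hA hE nYA nind.
have ea' := et a ha; have eb' := et b hb; have ec' := et c hc.
rewrite (coordQ1 ea1) (coordQ0 ya) in ea'.
rewrite (coordQ0 ab) in eb'.
rewrite (coordQ1 ec1) (coordQ0 ac) in ec'.
case: (H Y hY yc) => [yc1|[[_ oa1]|[yb0 _]]]; last by [].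
- rewrite (coordQ1 yc1) in ec'.
  have t0 : t = 0 by lra.
  by move: ea'; rewrite t0 mul0r addr0 => /eqP; rewrite oner_eq0.
- rewrite (coordQ1 oa1) in ea'.
  have t1 : t = 1 by lra.
  rewrite t1 in eb'.
  have : coordQ E b = 0 by rewrite eb'; ring.
  by move/coordQ_eq0.
Qed.

Lemma edge_coord3_eq1 a b c Oa Ob Y Z : two_axes a b c Oa Ob -> Y \in P -> Z \in P ->
  coord Y a = 0%N -> coord Y b <> 0%N -> coord Y c <> 0%N ->
  coord Z a <> 0%N -> coord Z b <> 0%N -> coord Z c = 0%N -> coord Y c = 1%N.
Proof.
case=> h3 hA hB [ab ac] [[ba bc] no] hY hZ ya yb yc za zb zc.
have [_ _ hc] := others_neq h3.
have aa := coord3_neq0 (others_rotl h3) hA ab ac.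
have hi : lin_indep Oa Z Y.
  apply: (lin_indep_of_coord (k := 0) hA hZ hY _ hc ac zc yc).
  by apply: (neq_of_coord (i := b)); rewrite ab; apply: nesym.
by case: (lin_indep_pattern3 h3 hA hZ hY hi); case_pattern.
Qed.

Lemma edge_coord2_eq1 a b c Oa Ob Y Y' : two_axes a b c Oa Ob -> Y \in P -> Y' \in P ->
  coord Y a = 0%N -> coord Y b <> 0%N -> coord Y c <> 0%N ->
  coord Y' a <> 0%N -> coord Y' b = 0%N -> coord Y' c <> 0%N -> coord Y b = 1%N.
Proof.
case=> h3 hA hB [ab ac] [[ba bc] no] hY hY' ya yb yc y'a y'b y'c.
have [_ hb _] := others_neq h3.
have aa := coord3_neq0 (others_rotl h3) hA ab ac.
have hi : lin_indep Oa Y' Y.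
  apply: (lin_indep_of_coord (k := 0) hA hY' hY _ hb ab y'b yb).
  by apply: (neq_of_coord (i := c)); rewrite ac; apply: nesym.
by case: (lin_indep_pattern3 h3 hA hY' hY hi); case_pattern.
Qed.

Lemma two_axes_support a b c Oa Ob Z : two_axes a b c Oa Ob -> Z \in P -> coord Z c <> 0%N ->
  [\/ coord Z a = 0%N /\ coord Z b <> 0%N, coord Z a <> 0%N /\ coord Z b = 0%N |
     coord Z a <> 0%N /\ coord Z b <> 0%N].
Proof.
case=> h3 hA hB [ab ac] [[ba bc] no] hZ zc.
have [za|za] := eqVneq (coord Z a) 0%N; have [zb|zb] := eqVneq (coord Z b) 0%N.
- by exfalso; apply: (no Z hZ).
- by constructor 1; split=> //; apply/eqP.
- by constructor 2; split=> //; apply/eqP.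
- by constructor 3; split; apply/eqP.
Qed.

Lemma flat_on_of_edges a b c Oa Ob Y Y' : edge_points_uniq -> two_axes a b c Oa Ob ->
  Y \in P -> Y' \in P ->
  coord Y a = 0%N -> coord Y b <> 0%N -> coord Y c <> 0%N ->
  coord Y' a <> 0%N -> coord Y' b = 0%N -> coord Y' c <> 0%N ->
  coord Y b = 1%N -> coord Y c = 1%N -> flat_on.
Proof.
move=> edges_uniq ax hY hY' ya yb yc y'a y'b y'c yb1 yc1.
case: (ax) => h3 hA hB [ab ac] [[ba bc] no].
have [_ hb hc] := others_neq h3.
have hbc := others_neq12 (others_rotl h3).
exists b, c, Y, Oa; do !split=> //.
move=> Z hZ nZY.
have [zc|zc] := eqVneq (coord Z c) 0%N; first by right.
case: (two_axes_support ax hZ (elimN eqP zc)) => [[za zb]|[za zb]|[za zb]].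
- by exfalso; apply: nZY; apply: (edges_uniq a b c h3) => //; apply/eqP.
- by left.
- by exfalso; apply: (two_axes_no_full ax hY hZ ya yb yc za zb (elimN eqP zc)).
Qed.

Lemma B_type_of_opposite_edges a b c Oa Ob Y Y' : edge_points_uniq -> two_axes a b c Oa Ob ->
  Y \in P -> Y' \in P ->
  coord Y a = 0%N -> coord Y b <> 0%N -> coord Y c <> 0%N ->
  coord Y' a <> 0%N -> coord Y' b = 0%N -> coord Y' c <> 0%N -> B_type.
Proof.
move=> edges_uniq ax hY hY' ya yb yc y'a y'b y'c.
have ax' := two_axes_swap ax.
have yb1 := edge_coord2_eq1 ax hY hY' ya yb yc y'a y'b y'c.
have y'a1 := edge_coord2_eq1 ax' hY' hY y'b y'a y'c yb ya yc.
have [yc1|yc1] := eqVneq (coord Y c) 1%N.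
  by right; right; apply: (flat_on_of_edges edges_uniq ax hY hY').
have [y'c1|y'c1] := eqVneq (coord Y' c) 1%N.
  by right; right; apply: (flat_on_of_edges edges_uniq ax' hY' hY).
have oa1 : coord Oa a = 1%N.
  case: (two_axes_coord3 ax hY yc) => [h|[[_ h]|[h _]]] //; by move/eqP: yc1.
have ob1 : coord Ob b = 1%N.
  case: (two_axes_coord3 ax' hY' y'c) => [h|[[_ h]|[h _]]] //; by move/eqP: y'c1.
case: (ax) => h3 hA hB [ab ac] [[ba bc] no].
have [ha hb _] := others_neq h3.
have hab := others_neq12 h3.
right; left; exists a, b; split=> // Z hZ.
have [zc|zc] := eqVneq (coord Z c) 0%N.
  have [za|za] := eqVneq (coord Z a) 0%N.
    have -> : Z = Ob by apply: (axis_point_uniq (others_swap23 h3)).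
    by right; right.
  have [zb|zb] := eqVneq (coord Z b) 0%N.
    have -> : Z = Oa by apply: (axis_point_uniq (others_rotl h3)).
    by right; left.
  exfalso; move/eqP: yc1; apply.
  exact: (edge_coord3_eq1 ax hY hZ ya yb yc (elimN eqP za) (elimN eqP zb) zc).
case: (two_axes_support ax hZ (elimN eqP zc)) => [[za zb]|[za zb]|[za zb]].
- have -> : Z = Y by apply: (edges_uniq a b c h3) => //; apply/eqP.
  by right; right.
- have -> : Z = Y' by apply: (edges_uniq b a c (others_swap12 h3)) => //; apply/eqP.
  by right; left.
- by exfalso; apply: (two_axes_no_full ax hY hZ ya yb yc za zb (elimN eqP zc)).
Qed.

Lemma B1_on_of_single_edge a b c Oa Ob Y0 : two_axes a b c Oa Ob -> Y0 \in P ->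
  coord Y0 a = 0%N -> coord Y0 b <> 0%N -> coord Y0 c <> 0%N -> coord Y0 c <> 1%N ->
  coord Oa a = 1%N -> (forall Z, Z \in P -> coord Z c <> 0%N -> Z = Y0) -> B1_on.
Proof.
move=> ax hY0 ya yb yc yc1 oa1 hW.
case: (ax) => h3 hA hB [ab ac] [[ba bc] no].
have [ha _ _] := others_neq h3.
exists a, Oa; split=> // Z hZ za.
have [zc|zc] := eqVneq (coord Z c) 0%N.
  have [zb|zb] := eqVneq (coord Z b) 0%N; first by apply: (axis_point_uniq (others_rotl h3)).
  by exfalso; apply: yc1; apply: (edge_coord3_eq1 ax hY0 hZ ya yb yc za (elimN eqP zb) zc).
by exfalso; apply: za; rewrite (hW Z hZ (elimN eqP zc)).
Qed.

Lemma B_type_of_two_axes a b c Oa Ob : edge_points_uniq -> two_axes a b c Oa Ob -> B_type.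
Proof.
move=> edges_uniq ax.
have ax' := two_axes_swap ax.
case: (ax) => h3 hA hB [ab ac] [[ba bc] no].
have [_ _ hc] := others_neq h3.
have [Y0 [hY0 y0c]] := coord_cover hc.
have [[Y [Y' [hY [hY' [nYY' [yc y'c]]]]]]|hno] := classic (exists Y Y', Y \in P /\ Y' \in P /\
     Y <> Y' /\ coord Y c <> 0%N /\ coord Y' c <> 0%N).
  case: (two_axes_support ax hY yc) => [[ya yb]|[ya yb]|[ya yb]];
  case: (two_axes_support ax hY' y'c) => [[y'a y'b]|[y'a y'b]|[y'a y'b]].
  - by exfalso; apply: nYY'; apply: (edges_uniq a b c h3).
  - exact: (B_type_of_opposite_edges edges_uniq ax hY hY').
  - by exfalso; apply: (two_axes_no_full ax hY hY' ya yb yc).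
  - exact: (B_type_of_opposite_edges edges_uniq ax hY' hY).
  - by exfalso; apply: nYY'; apply: (edges_uniq b a c (others_swap12 h3)).
  - by exfalso; apply: (two_axes_no_full ax' hY hY' yb ya yc).
  - by exfalso; apply: (two_axes_no_full ax hY' hY y'a y'b y'c).
  - by exfalso; apply: (two_axes_no_full ax' hY' hY y'b y'a y'c).
  - by exfalso; apply: nYY'; apply: (full_point_uniq h3).
have hW : forall Z, Z \in P -> coord Z c <> 0%N -> Z = Y0.
  by move=> Z hZ zc; apply: NNPP => nZ; apply: hno; exists Z, Y0.
have [y0c1|y0c1] := eqVneq (coord Y0 c) 1%N.
  by left; exists c, Y0; split.
case: (two_axes_coord3 ax hY0 y0c) => [y|[[y0a oa1]|[y0b ob1]]].
- by move/eqP: y0c1.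
- left; apply: (B1_on_of_single_edge ax hY0 y0a _ y0c (elimN eqP y0c1) oa1 hW).
  by move=> y0b; apply: (no Y0 hY0).
- left; apply: (B1_on_of_single_edge ax' hY0 y0b _ y0c (elimN eqP y0c1) ob1 hW).
  by move=> y0a; apply: (no Y0 hY0).
Qed.

Definition one_axis a b c Oc := [/\ others a b c, Oc \in P,
  coord Oc a = 0%N /\ coord Oc b = 0%N, no_axis_point b c & no_axis_point a c].

Lemma one_axis_swap a b c Oc : one_axis a b c Oc -> one_axis b a c Oc.
Proof.
by case=> h3 hC [ca cb] n1 n2; split=> //; exact: others_swap12.
Qed.

Lemma one_axis_coord1 a b c Oc Y : one_axis a b c Oc -> Y \in P ->
  coord Y a = 0%N -> coord Y b <> 0%N -> coord Y c <> 0%N ->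
  forall Z, Z \in P -> coord Z a <> 0%N ->
  coord Z a = 1%N \/ (coord Z b = 0%N /\ coord Y b = 1%N).
Proof.
case=> h3 hC [ca cb] n1 n2 hY ya yb yc Z hZ za.
have [ha _ _] := others_neq h3.
have cc := coord3_neq0 h3 hC ca cb.
have hi : lin_indep Oc Y Z.
  apply: (lin_indep_of_coord (k := 0) hC hY hZ _ ha ca ya za).
  by apply: (neq_of_coord (i := b)); rewrite cb; apply: nesym.
case: (lin_indep_pattern3 h3 hC hY hZ hi); case_pattern; first [by left | by right].
Qed.

Lemma B1_on_of_opposite_edges a b c Oc Y Y' : edge_points_uniq -> one_axis a b c Oc ->
  Y \in P -> Y' \in P ->
  coord Y a = 0%N -> coord Y b <> 0%N -> coord Y c <> 0%N ->
  coord Y' a <> 0%N -> coord Y' b = 0%N -> coord Y' c <> 0%N ->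
  coord Y' a = 1%N -> B1_on.
Proof.
move=> edges_uniq ax hY hY' ya yb yc y'a y'b y'c y'a1.
have ax' := one_axis_swap ax.
case: (ax) => h3 hC [ca cb] n1 n2.
have [ha _ _] := others_neq h3.
exists a, Y'; split=> // Z hZ za.
have [zb|zb] := eqVneq (coord Z b) 0%N.
  apply: (edges_uniq b a c (others_swap12 h3)) => //.
  by move=> zc; apply: (n1 Z hZ).
have za1 : coord Z a = 1%N.
  by case: (one_axis_coord1 ax hY ya yb yc hZ za) => [//|[zb0 _]]; move/eqP: zb.
have zb1 : coord Z b = 1%N.
  by case: (one_axis_coord1 ax' hY' y'b y'a y'c hZ (elimN eqP zb)) => [//|[za0 _]].
apply: NNPP => nZY.
have hi : lin_indep Y' Z Y.
  by apply: (lin_indep_of_coord (k := 1) hY' hZ hY (nesym nZY) ha y'a1 za1); rewrite ya.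
by case: (lin_indep_pattern3 h3 hY' hZ hY hi); case_pattern.
Qed.

Lemma B_type_of_edge a b c Oc Y : edge_points_uniq -> one_axis a b c Oc -> Y \in P ->
  coord Y a = 0%N -> coord Y b <> 0%N -> coord Y c <> 0%N -> B_type.
Proof.
move=> edges_uniq ax hY ya yb yc.
have ax' := one_axis_swap ax.
case: (ax) => h3 hC [ca cb] n1 n2.
have [ha _ _] := others_neq h3.
have cc := coord3_neq0 h3 hC ca cb.
have [[Y' [hY' [y'a [y'b y'c]]]]|hno] := classic (exists Y', Y' \in P /\
    coord Y' a <> 0%N /\ coord Y' b = 0%N /\ coord Y' c <> 0%N).
  left; case: (one_axis_coord1 ax hY ya yb yc hY' y'a) => [y'a1|[_ yb1]].
    exact: (B1_on_of_opposite_edges edges_uniq ax hY hY' ya yb yc y'a y'b y'c y'a1).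
  exact: (B1_on_of_opposite_edges edges_uniq ax' hY' hY y'b y'a y'c yb ya yc yb1).
have HZ : forall Z, Z \in P -> coord Z a <> 0%N -> coord Z a = 1%N.
  move=> Z hZ za.
  have zb : coord Z b <> 0%N.
    move=> zb; have [zc|zc] := eqVneq (coord Z c) 0%N; first by apply: (n1 Z hZ).
    by apply: hno; exists Z; do !split=> //; apply/eqP.
  by case: (one_axis_coord1 ax hY ya yb yc hZ za) => [//|[]].
have [Z0 [hZ0 z0a]] := coord_cover ha.
left; exists a, Z0; split; [by []|by []|exact: HZ|].
move=> Z hZ za; apply: NNPP => nZ.
have zb : forall W, W \in P -> coord W a <> 0%N -> coord W b <> 0%N.
  move=> W hW wa wb; have [wc|wc] := eqVneq (coord W c) 0%N; first by apply: (n1 W hW).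
  by apply: hno; exists W; do !split=> //; apply/eqP.
have hi : lin_indep Z Z0 Oc.
  apply: (lin_indep_of_coord (k := 1) hZ hZ0 hC nZ ha (HZ _ hZ za) (HZ _ hZ0 z0a)).
  by rewrite ca.
have zbZ := zb _ hZ za; have zbZ0 := zb _ hZ0 z0a.
case: (lin_indep_pattern3 h3 hZ hZ0 hC hi); case_pattern.
apply: nZ; apply: (edges_uniq c a b (others_rotr h3)) => //.
Qed.

Lemma B_type_of_two_zeros a b c Oc X X' : edge_points_uniq -> one_axis a b c Oc ->
  X \in P -> X' \in P -> X <> X' ->
  coord X a = 0%N -> coord X' a = 0%N -> B_type.
Proof.
move=> edges_uniq ax hX hX' nXX' xa x'a.
case: (ax) => h3 hC [ca cb] n1 n2.
have [xb|xb] := eqVneq (coord X b) 0%N.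
  have [x'b|x'b] := eqVneq (coord X' b) 0%N.
    exfalso; apply: nXX'.
    by rewrite (axis_point_uniq h3 hX hC xa xb ca cb) (axis_point_uniq h3 hX' hC x'a x'b ca cb).
  apply: (B_type_of_edge edges_uniq ax hX' x'a (elimN eqP x'b)).
  by move=> x'c; apply: (n2 X' hX').
apply: (B_type_of_edge edges_uniq ax hX xa (elimN eqP xb)).
by move=> xc; apply: (n2 X hX).
Qed.

Lemma one_axis_two_zeros3 a b c Oc X X' : edge_points_uniq -> one_axis a b c Oc ->
  X \in P -> X' \in P -> X <> X' ->
  coord X c = 0%N -> coord X' c = 0%N -> False.
Proof.
move=> edges_uniq ax hX hX' nXX' xc x'c.
case: (ax) => h3 hC [ca cb] n1 n2.
apply: nXX'; apply: (edges_uniq c a b (others_rotr h3)) => //.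
- by move=> xa; apply: (n2 X hX).
- by move=> xb; apply: (n1 X hX).
- by move=> xa; apply: (n2 X' hX').
- by move=> xb; apply: (n1 X' hX').
Qed.

Lemma B_type_of_one_axis a b c Oc : edge_points_uniq -> one_axis a b c Oc -> B_type.
Proof.
move=> edges_uniq ax; have [m [X [X' [hm hX hX' nXX' [xm x'm]]]]] := zero_pair_exists.
have h3 : others a b c by case: ax.
case: (others_cases h3 hm) => em; subst m.
- exact: (B_type_of_two_zeros edges_uniq ax hX hX' nXX' xm x'm).
- exact: (B_type_of_two_zeros edges_uniq (one_axis_swap ax) hX hX' nXX' xm x'm).
- by case: (one_axis_two_zeros3 edges_uniq ax hX hX' nXX' xm x'm).
Qed.

Lemma no_axis_absurd a b c : edge_points_uniq -> others a b c ->
  no_axis_point a b -> no_axis_point a c -> no_axis_point b c -> False.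
Proof.
move=> edges_uniq h3 nab nac nbc.
have [m [X [X' [hm hX hX' nXX' [xm x'm]]]]] := zero_pair_exists.
have two_zeros a' b' c' : others a' b' c' -> no_axis_point a' b' -> no_axis_point a' c' ->
    coord X a' = 0%N -> coord X' a' = 0%N -> False.
  move=> o3 n1 n2 xa x'a; apply: nXX'; apply: (edges_uniq a' b' c' o3) => // h;
    by [apply: (n1 X) | apply: (n2 X) | apply: (n1 X') | apply: (n2 X')].
case: (others_cases h3 hm) => em; subst m.
- exact: (two_zeros _ _ _ h3 nab nac).
- exact: (two_zeros _ _ _ (others_swap12 h3) (no_axis_point_sym nab) nbc).
- exact: (two_zeros _ _ _ (others_rotr h3) (no_axis_point_sym nac) (no_axis_point_sym nbc)).
Qed.

Lemma axis_pointP a b :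
  (exists O, O \in P /\ coord O a = 0%N /\ coord O b = 0%N) \/ no_axis_point a b.
Proof.
have [hO|nO] := classic (exists O, O \in P /\ coord O a = 0%N /\ coord O b = 0%N); first by left.
by right=> Y hY hab; apply: nO; exists Y.
Qed.

Lemma B_type_holds : B_type.
Proof.
have [a [b [c h3]]] := others_exist.
have [edges_uniq|edges_not_uniq] := classic edge_points_uniq; last first.
  apply: NNPP => hcon; apply: edges_not_uniq => a' b' c' o3 Y Y' hY hY' ya y'a yb yc y'b y'c.
  apply: NNPP => nYY'; apply: hcon.
  exact: (B_type_of_two_edge_points o3 hY hY' nYY' ya y'a yb yc y'b y'c).
have [[Oa [hA [ab ac]]]|nA] := axis_pointP b c;
have [[Ob [hB [ba bc]]]|nB] := axis_pointP a c;
have [[Oc [hC [ca cb]]]|nC] := axis_pointP a b.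
- exact: (B_type_of_three_axes h3 hA hB hC ab ac ba bc ca cb).
- exact: (B_type_of_two_axes edges_uniq (And5 h3 hA hB (conj ab ac) (conj (conj ba bc) nC))).
- exact: (B_type_of_two_axes edges_uniq
    (And5 (others_swap23 h3) hA hC (conj ac ab) (conj (conj ca cb) nB))).
- exact: (B_type_of_one_axis edges_uniq (And5 (others_rotl h3) hA (conj ab ac)
    (no_axis_point_sym nB) (no_axis_point_sym nC))).
- exact: (B_type_of_two_axes edges_uniq
    (And5 (others_rotl h3) hB hC (conj bc ba) (conj (conj cb ca) nA))).
- exact: (B_type_of_one_axis edges_uniq
    (And5 (others_swap23 h3) hB (conj ba bc) (no_axis_point_sym nA) nC)).
- exact: (B_type_of_one_axis edges_uniq (And5 h3 hC (conj ca cb) nA nB)).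
- by case: (no_axis_absurd edges_uniq h3 nC nB nA).
Qed.

End ProjectedFacet.

End OffCoordinate.

Section Facet.
Variables (tau : {fset pt 4}) (Q : pt 4) (l : 'I_4) (a : 'rV[rat]_4) (b : rat).
Hypothesis Q_in : Q \in tau.
Hypothesis Q_l : coord Q l <> 0%N.
Hypothesis Q_off : forall i, i != l -> coord Q i = 0%N.
Hypothesis a_gt0 : forall j, 0 < a ord0 j.
Hypothesis aff_span_tau : forall y : 'rV[rat]_4,
  in_aff_span tau y <-> (\sum_(j < 4) a ord0 j * y ord0 j = b).
Hypothesis affdim_P : affdim (tau `\ Q) = 2%N.
Hypothesis B_simplices : forall S, S `<=` tau -> is_simplex 3 S -> is_B_simplex 3 S.

Local Notation P := (tau `\ Q).

Lemma plane_eq X : X \in tau -> \sum_(j < 4) a ord0 j * coordQ X j = b.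
Proof.
move=> hX; have := (aff_span_tau (ptQ X)).1; rewrite /in_aff_span.
have h : \sum_(j < 4) a ord0 j * coordQ X j = \sum_(j < 4) a ord0 j * ptQ X ord0 j.
  by apply: eq_bigr => j _; rewrite ptQE.
rewrite h; apply; exists (fun x => (x == X)%:R); split.
  rewrite (bigD1_seq X) ?fset_uniq //= eqxx big1 ?addr0 // => x /negbTE ->.
  by [].
rewrite (bigD1_seq X) ?fset_uniq //= eqxx scale1r big1 ?addr0 //.
by move=> x /negbTE ->; rewrite scale0r.
Qed.

Lemma b_gt0 : 0 < b.
Proof.
rewrite -(plane_eq Q_in) (sum_only1 (i := l)).
  by rewrite pmulr_rgt0 // /coordQ ltr0n lt0n; apply/eqP.
by move=> j hj; rewrite (coordQ0 (Q_off hj)) mulr0.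
Qed.

Lemma plane_l X : X \in tau ->
  a ord0 l * coordQ X l = b - \sum_(j < 4 | j != l) a ord0 j * coordQ X j.
Proof. by move=> hX; rewrite -(plane_eq hX) (bigD1 l) //=; ring. Qed.

Lemma P_sub X : X \in P -> X \in tau.
Proof. by rewrite in_fsetD1 => /andP[]. Qed.

Lemma P_neqQ X : X \in P -> X != Q.
Proof. by rewrite in_fsetD1 => /andP[]. Qed.

Lemma facet_proj_inj X Y : X \in P -> Y \in P ->
  (forall i, i != l -> coord X i = coord Y i) -> X = Y.
Proof.
move=> /P_sub hX /P_sub hY h.
have el : coord X l = coord Y l.
  apply/coordQ_inj/(mulfI (lt0r_neq0 (a_gt0 l))).
  rewrite (plane_l hX) (plane_l hY); congr (_ - _).
  by apply: eq_bigr => j /h; rewrite /coordQ => ->.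
apply/matrixP => i j; rewrite (ord1 i).
by have [->|/h] := eqVneq j l.
Qed.

Lemma mul_aT (w : 'rV[rat]_4) : (w *m a^T) ord0 ord0 = \sum_(j < 4) a ord0 j * w ord0 j.
Proof. by rewrite !mxE; apply: eq_bigr => j _; rewrite !mxE mulrC. Qed.

Lemma mul_aT0 (w : 'rV[rat]_4) : \sum_(j < 4) a ord0 j * w ord0 j = 0 -> w *m a^T = 0.
Proof. by move=> h; apply/matrixP => i k; rewrite (ord1 i) (ord1 k) mul_aT h mxE. Qed.

Lemma rank_ker_aT : \rank (kermx a^T) = 3%N.
Proof.
rewrite mxrank_ker mxrank_tr rank_rV.
have -> : (a != 0) by apply/eqP => a0; have := a_gt0 l; rewrite a0 mxE ltxx.
by [].
Qed.

Lemma plane_eq_comb3 (al be ga : rat) X Y Z : X \in tau -> Y \in tau -> Z \in tau ->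
  \sum_(j < 4) a ord0 j * (al * coordQ X j + be * coordQ Y j + ga * coordQ Z j) =
  (al + be + ga) * b.
Proof.
move=> hX hY hZ.
have -> : \sum_(j < 4) a ord0 j * (al * coordQ X j + be * coordQ Y j + ga * coordQ Z j) =
  al * (\sum_(j < 4) a ord0 j * coordQ X j) + be * (\sum_(j < 4) a ord0 j * coordQ Y j)
  + ga * (\sum_(j < 4) a ord0 j * coordQ Z j).
  rewrite !mulr_sumr -!big_split /=; apply: eq_bigr => j _; ring.
rewrite !plane_eq //; ring.
Qed.

Lemma aff_span_diffmx y : in_aff_span tau y -> (ptQ Q - ptQ (basept P) <= diffmx P)%MS ->
  (y - ptQ (basept P) <= diffmx P)%MS.
Proof.
move=> [c [hc ->]] hQD.
have -> : \sum_(x <- tau) c x *: ptQ x - ptQ (basept P) =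
   \sum_(x <- tau) c x *: (ptQ x - ptQ (basept P)).
  under [X in _ = X]eq_bigr do rewrite scalerBr.
  by rewrite sumrB -scaler_suml hc scale1r.
rewrite big_seq; apply: summx_sub => x hx; apply: scalemx_sub.
have [->|nxQ] := eqVneq x Q; first exact: hQD.
by apply: diffmx_row; rewrite in_fsetD1 nxQ.
Qed.

(* Otherwise the affine span of [P] would contain the hyperplane spanned by [tau]. *)
Lemma Q_notin_aff_P X Y Z (al be ga : rat) : X \in P -> Y \in P -> Z \in P -> al + be + ga = 1 ->
  ptQ Q = al *: ptQ X + be *: ptQ Y + ga *: ptQ Z -> False.
Proof.
move=> hX hY hZ s e.
have hQD : (ptQ Q - ptQ (basept P) <= diffmx P)%MS.
  have -> : ptQ Q - ptQ (basept P) = al *: (ptQ X - ptQ (basept P)) +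
     be *: (ptQ Y - ptQ (basept P)) + ga *: (ptQ Z - ptQ (basept P)).
    rewrite e; apply/rowP => j; rewrite !mxE.
    have -> : ga = 1 - al - be by lra.
    ring.
  by apply: addmx_sub; [apply: addmx_sub|]; apply: scalemx_sub; apply: diffmx_row.
have kerD : (kermx a^T <= diffmx P)%MS.
  apply/row_subP => k.
  set w := row k (kermx a^T).
  have hw : w *m a^T = 0 by apply/sub_kermxP; apply: row_sub.
  have hw0 : \sum_(j < 4) a ord0 j * w ord0 j = 0 by rewrite -mul_aT hw mxE.
  have hy1 : in_aff_span tau (ptQ Q).
    by apply/aff_span_tau; rewrite -(plane_eq Q_in); apply: eq_bigr => j _; rewrite ptQE.
  have hy2 : in_aff_span tau (ptQ Q + w).
    apply/aff_span_tau.
    have -> : \sum_(j < 4) a ord0 j * (ptQ Q + w) ord0 j =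
       \sum_(j < 4) a ord0 j * coordQ Q j + \sum_(j < 4) a ord0 j * w ord0 j.
      by rewrite -big_split /=; apply: eq_bigr => j _; rewrite !mxE; ring.
    by rewrite hw0 addr0 plane_eq.
  have -> : w = (ptQ Q + w - ptQ (basept P)) - (ptQ Q - ptQ (basept P)).
    by apply/rowP => j; rewrite !mxE; ring.
  by apply: addmxN_sub; apply: aff_span_diffmx.
have := mxrankS kerD; rewrite rank_ker_aT -affdimE affdim_P.
by [].
Qed.

(* A relation with nonzero sum s exhibits Q as the affine combination of X, Y, Z with
   weights al/s, be/s, ga/s: off [l] both sides vanish, and the hyperplane equation fixes
   the l-th coordinate. *)
Lemma facet_lin_rel_sum0 X Y Z : X \in P -> Y \in P -> Z \in P -> forall al be ga : rat,
  (forall i, i != l -> al * coordQ X i + be * coordQ Y i + ga * coordQ Z i = 0) ->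
  al + be + ga = 0.
Proof.
move=> hX hY hZ al be ga H; apply/eqP/negP => /negP sn.
set s := al + be + ga in sn.
apply: (Q_notin_aff_P (al := al / s) (be := be / s) (ga := ga / s) hX hY hZ).
  by rewrite /s; field.
have hal := lt0r_neq0 (a_gt0 l).
have eQ : a ord0 l * coordQ Q l = b.
  rewrite -(plane_eq Q_in) (sum_only1 (i := l)) // => j hj.
  by rewrite (coordQ0 (Q_off hj)) mulr0.
have ev : a ord0 l * (al * coordQ X l + be * coordQ Y l + ga * coordQ Z l) = s * b.
  rewrite -(plane_eq_comb3 al be ga (P_sub hX) (P_sub hY) (P_sub hZ)) (sum_only1 (i := l)) //.
  by move=> j hj; rewrite H // mulr0.
apply/rowP => j; rewrite !mxE.
have [->|hj] := eqVneq j l.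
  apply: (mulfI hal); rewrite eQ.
  have -> : a ord0 l * (al / s * coordQ X l + be / s * coordQ Y l + ga / s * coordQ Z l) =
    (a ord0 l * (al * coordQ X l + be * coordQ Y l + ga * coordQ Z l)) / s by field.
  by rewrite ev; field.
rewrite (_ : (coord Q j)%:R = 0); last by rewrite (Q_off hj).
have := H j hj; rewrite /coordQ => h.
have -> : al / s * (coord X j)%:R + be / s * (coord Y j)%:R + ga / s * (coord Z j)%:R =
  (al * (coord X j)%:R + be * (coord Y j)%:R + ga * (coord Z j)%:R) / s by field.
by rewrite h mul0r.
Qed.

Lemma facet_lin_indep_span X Y Z : X \in P -> Y \in P -> Z \in P -> lin_indep l X Y Z ->
  forall W, W \in P -> exists al be ga : rat, al + be + ga = 1 /\
    forall j, coordQ W j = al * coordQ X j + be * coordQ Y j + ga * coordQ Z j.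
Proof.
move=> hX hY hZ hi W hW.
pose M2 := \matrix_(k < 2, j < 4)
  (if k == ord0 then ptQ Y ord0 j - ptQ X ord0 j else ptQ Z ord0 j - ptQ X ord0 j).
have sM2 : (M2 <= diffmx P)%MS.
  apply/row_subP => k.
  have [->|hk] := eqVneq k ord0.
    have -> : row ord0 M2 = ptQ Y - ptQ X by apply/rowP => j; rewrite !mxE.
    exact: diffmx_sub.
  have -> : row k M2 = ptQ Z - ptQ X by apply/rowP => j; rewrite !mxE (negbTE hk).
  exact: diffmx_sub.
have fM2 : row_free M2.
  apply: inj_row_free => v hv.
  have H : forall j, v ord0 ord0 * (coordQ Y j - coordQ X j) +
      v ord0 (lift ord0 ord0) * (coordQ Z j - coordQ X j) = 0.
    move=> j; have := congr1 (fun M : 'M[rat]_(1,4) => M ord0 j) hv.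
    by rewrite !mxE big_ord_recl big_ord1 !mxE.
  have H' : forall j, j != l -> (- v ord0 ord0 - v ord0 (lift ord0 ord0)) * coordQ X j +
     v ord0 ord0 * coordQ Y j + v ord0 (lift ord0 ord0) * coordQ Z j = 0.
    by move=> j _; rewrite -(H j); ring.
  have [h1 h2 h3] := hi _ _ _ H'.
  apply/rowP => k; rewrite mxE.
  have [->|hk] := eqVneq k ord0; first by [].
  suff -> : k = lift ord0 ord0 by [].
  by apply: val_inj; case: k hk => [[|[|?]] ?] //=.
have DM2 : (diffmx P <= M2)%MS.
  rewrite -(mxrank_leqif_sup sM2).2.
  by move: fM2; rewrite /row_free -affdimE affdim_P => /eqP ->.
have : (ptQ W - ptQ X <= M2)%MS by apply: submx_trans DM2; apply: diffmx_sub.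
case/submxP => w ew.
exists (1 - w ord0 ord0 - w ord0 (lift ord0 ord0)), (w ord0 ord0), (w ord0 (lift ord0 ord0)).
split; first by ring.
move=> j; have := congr1 (fun M : 'M[rat]_(1,4) => M ord0 j) ew.
rewrite !mxE big_ord_recl big_ord1 !mxE /= => h.
have -> : coordQ W j = (coordQ W j - coordQ X j) + coordQ X j by ring.
rewrite h; ring.
Qed.

(* If x_i vanished on [tau], the point (b / a_i) e_i of the hyperplane would lie outside
   the affine span of [tau]. *)
Lemma facet_coord_cover i : i != l -> exists Y, Y \in P /\ coord Y i <> 0%N.
Proof.
move=> hi; apply: NNPP => hno.
have h0 : forall x, x \in tau -> coordQ x i = 0.
  move=> x hx; have [->|nxQ] := eqVneq x Q; first by rewrite (coordQ0 (Q_off hi)).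
  apply: coordQ0; apply: NNPP => nz; apply: hno; exists x; split=> //.
  by rewrite in_fsetD1 nxQ.
have hai := lt0r_neq0 (a_gt0 i).
pose y : 'rV[rat]_4 := (b / a ord0 i) *: delta_mx ord0 i.
have hy : in_aff_span tau y.
  apply/aff_span_tau; rewrite (sum_only1 (i := i)).
    by rewrite /y !mxE !eqxx /=; field.
  by move=> j hj; rewrite /y !mxE (negbTE hj) andbF mulr0 mulr0.
case: hy => c [_ e].
have := congr1 (fun M : 'M[rat]_(1,4) => M ord0 i) e; rewrite summxE /y !mxE !eqxx /= mulr1.
rewrite big_seq big1; last by move=> x hx; rewrite !mxE -/(coordQ x i) (h0 x hx) mulr0.
move/eqP; rewrite mulf_eq0 invr_eq0 (negbTE hai) orbF => /eqP b0.
by have := b_gt0; rewrite b0 ltxx.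
Qed.

Lemma facet_lin_indep_triple : exists X Y Z, [/\ X \in P, Y \in P, Z \in P & lin_indep l X Y Z].
Proof.
set D := diffmx P.
have [k1 [k2 [hk1 hk2]]] := rank2_rows (affdim_P : \rank D = 2%N).
set s := enum_fset P.
have hsz : (0 < size s)%N by apply: leq_ltn_trans (leq0n k1) (ltn_ord k1).
set X0 := nth (const_mx 0%N) s 0.
set X1 := nth (const_mx 0%N) s k1.
set X2 := nth (const_mx 0%N) s k2.
have hX0 : X0 \in P by apply: mem_nth.
have hX1 : X1 \in P by apply: mem_nth.
have hX2 : X2 \in P by apply: mem_nth.
have rD : forall k, row k D = ptQ (nth (const_mx 0%N) s k) - ptQ X0.
  by move=> k; apply/rowP => j; rewrite !mxE.
exists X0, X1, X2; split=> // al be ga H.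
have sm := facet_lin_rel_sum0 hX0 hX1 hX2 H.
have v0 : forall j, al * coordQ X0 j + be * coordQ X1 j + ga * coordQ X2 j = 0.
  move=> j; have [->|hj] := eqVneq j l; last exact: H.
  have := plane_eq_comb3 al be ga (P_sub hX0) (P_sub hX1) (P_sub hX2).
  rewrite sm mul0r (sum_only1 (i := l)); last by move=> j' hj'; rewrite H // mulr0.
  move/eqP; rewrite mulf_eq0 gt_eqF //= => /eqP //.
have e : forall j, be * (row k1 D) ord0 j + ga * (row k2 D) ord0 j = 0.
  move=> j; rewrite !rD !mxE -!/(coordQ _ j).
  have eal : al = - be - ga by lra.
  have := v0 j; rewrite eal => h; rewrite -h; ring.
have ga0 : ga = 0.
  apply/eqP/negP => /negP gnz; move/negP: hk2; apply.
  have -> : row k2 D = (- be / ga) *: row k1 D.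
    apply/rowP => j; rewrite [RHS]mxE; have := e j => h.
    apply: (mulfI gnz).
    have -> : ga * (- be / ga * row k1 D ord0 j) = - be * row k1 D ord0 j by field.
    have : ga * row k2 D ord0 j - (- be * row k1 D ord0 j) =
      be * row k1 D ord0 j + ga * row k2 D ord0 j by ring.
    by rewrite h => /eqP; rewrite subr_eq0 => /eqP.
  exact: scalemx_sub (submx_refl _).
have be0 : be = 0.
  have : be *: row k1 D = 0.
    by apply/rowP => j; rewrite [LHS]mxE [RHS]mxE; have := e j; rewrite ga0 mul0r addr0.
  by move/eqP; rewrite scaler_eq0 (negbTE hk1) orbF => /eqP.
split=> //; lra.
Qed.

Lemma affdim_le3 (S : {fset pt 4}) : S `<=` tau -> (affdim S <= 3)%N.
Proof.
move=> hSt; apply: (leq_trans _ (eq_leq rank_ker_aT)); apply: mxrankS.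
apply: diffmx_le => x hx; apply/sub_kermxP/mul_aT0.
have hb : basept S \in tau by apply/(fsubsetP hSt)/(basept_in hx).
have -> : \sum_(j < 4) a ord0 j * (ptQ x - ptQ (basept S)) ord0 j =
    \sum_(j < 4) a ord0 j * coordQ x j - \sum_(j < 4) a ord0 j * coordQ (basept S) j.
  by rewrite -sumrB; apply: eq_bigr => j _; rewrite !mxE; ring.
by rewrite !plane_eq ?subrr // (fsubsetP hSt).
Qed.

Lemma QXYZ_uniq X Y Z : X \in P -> Y \in P -> Z \in P -> lin_indep l X Y Z ->
  uniq [:: Q; X; Y; Z].
Proof.
move=> hX hY hZ hi; rewrite /= !inE !negb_or !(eq_sym Q) !P_neqQ //.
rewrite (introN eqP (lin_indep_neq12 hi)) (introN eqP (lin_indep_neq13 hi)).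
by rewrite (introN eqP (lin_indep_neq23 hi)).
Qed.

Lemma QXYZE X Y Z : [fset Q; X; Y; Z] =i [:: Q; X; Y; Z].
Proof. by move=> x; rewrite !inE /= !orbA. Qed.

Lemma QXYZ_sub X Y Z : X \in P -> Y \in P -> Z \in P -> [fset Q; X; Y; Z] `<=` tau.
Proof.
by move=> hX hY hZ; apply/fsubsetP => x; rewrite QXYZE !inE => /or4P[] /eqP ->;
  rewrite ?Q_in ?P_sub.
Qed.

Lemma QXYZ_simplex X Y Z : X \in P -> Y \in P -> Z \in P -> lin_indep l X Y Z ->
  is_simplex 3 [fset Q; X; Y; Z].
Proof.
move=> hX hY hZ hi; split; first by rewrite (cardfs_seq (QXYZ_uniq hX hY hZ hi) (QXYZE _ _ _)).
pose M3 := \matrix_(k < 3, j < 4) (ptQ (nth Q [:: X; Y; Z] k) ord0 j - ptQ Q ord0 j).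
have lo : (M3 <= diffmx [fset Q; X; Y; Z])%MS.
  apply/row_subP => k.
  have -> : row k M3 = ptQ (nth Q [:: X; Y; Z] k) - ptQ Q by apply/rowP => j; rewrite !mxE.
  apply: diffmx_sub; last by rewrite QXYZE !inE eqxx.
  by rewrite QXYZE; case: k => [[|[|[|?]]] ?] //=; rewrite !inE eqxx ?orbT.
have fM3 : row_free M3.
  apply: inj_row_free => v hv.
  have H : forall j, j != l -> v ord0 ord0 * coordQ X j + v ord0 (lift ord0 ord0) * coordQ Y j +
      v ord0 (lift ord0 (lift ord0 ord0)) * coordQ Z j = 0.
    move=> j hj; have := congr1 (fun M : 'M[rat]_(1,4) => M ord0 j) hv.
    rewrite !mxE !big_ord_recl big_ord0 addr0 addrA !mxE /= -!/(coordQ _ j).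
    by rewrite (coordQ0 (Q_off hj)) !subr0 => ->.
  have [h1 h2 h3] := hi _ _ _ H.
  apply/rowP => k; rewrite mxE.
  by case: k => [[|[|[|?]]] ?] //=; [rewrite -h1|rewrite -h2|rewrite -h3]; congr (v _ _);
     apply: val_inj.
apply/anti_leq/andP; split; first exact: affdim_le3 (QXYZ_sub hX hY hZ).
by apply: (leq_trans _ (mxrankS lo)); rewrite (eqP fM3).
Qed.

Lemma facet_lin_indep_pattern X Y Z : X \in P -> Y \in P -> Z \in P -> lin_indep l X Y Z ->
  (exists i, i != l /\ unit_pattern i X Y Z) \/
  [/\ coord X l = 0%N, coord Y l = 0%N, coord Z l = 0%N & coord Q l = 1%N].
Proof.
move=> hX hY hZ hi.
have [_ [i [hcnt h01]]] := B_simplices (QXYZ_sub hX hY hZ) (QXYZ_simplex hX hY hZ hi).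
rewrite (card_fsep_seq _ (QXYZ_uniq hX hY hZ hi) (QXYZE _ _ _)) /= in hcnt.
have [eil|nil] := eqVneq i l.
  subst i; right.
  have q1 : coord Q l = 1%N by apply: h01; rewrite ?inE ?eqxx //; apply/eqP.
  move: hcnt; rewrite q1 /=.
  by case: eqP; case: eqP; case: eqP.
left; exists i; split=> //.
move: hcnt; rewrite (Q_off nil) eqxx /=.
case: (eqVneq (coord X i) 0%N) => xi; case: (eqVneq (coord Y i) 0%N) => yi;
  case: (eqVneq (coord Z i) 0%N) => zi //= _.
- by constructor 1; split=> //; apply: h01; rewrite ?inE ?eqxx ?orbT.
- by constructor 2; split=> //; apply: h01; rewrite ?inE ?eqxx ?orbT.
- by constructor 3; split=> //; apply: h01; rewrite ?inE ?eqxx ?orbT.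
Qed.

Lemma in_P x : x \in tau -> x != Q -> x \in P.
Proof. by move=> hx nxQ; rewrite in_fsetD1 nxQ hx. Qed.

Lemma B1_facet_of_flat_l X Y Z : X \in P -> Y \in P -> Z \in P -> lin_indep l X Y Z ->
  coord X l = 0%N -> coord Y l = 0%N -> coord Z l = 0%N -> coord Q l = 1%N -> is_B1_facet tau.
Proof.
move=> hX hY hZ hi xl yl zl ql; exists l.
have W_l W : W \in P -> coord W l = 0%N.
  move=> hW; have [al [be [ga [_ e]]]] := facet_lin_indep_span hX hY hZ hi hW.
  by apply: coordQ_eq0; rewrite e (coordQ0 xl) (coordQ0 yl) (coordQ0 zl); ring.
have -> : [fset x in tau | coord x l != 0%N] = [fset Q].
  apply/fsetP => x; rewrite !inE; apply/andP/eqP => [[hx]|->]; last by rewrite ql.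
  by apply: contraNeq => nxQ; rewrite W_l ?in_P.
split=> [|x hx]; first exact: cardfs1.
by have [->|nxQ] := eqVneq x Q; [rewrite ql | rewrite W_l ?in_P].
Qed.

Lemma B1_facet_of_B1_on : B1_on l P -> is_B1_facet tau.
Proof.
move=> [i [C [il hC ci hu]]]; exists i.
have nz_C x : x \in tau -> coord x i != 0%N -> x = C.
  move=> hx nz; have [exQ|nxQ] := eqVneq x Q; first by move: nz; rewrite exQ Q_off.
  by apply: hu; [apply: in_P | apply/eqP].
have -> : [fset x in tau | coord x i != 0%N] = [fset C].
  apply/fsetP => x; rewrite !inE; apply/andP/eqP => [[hx /(nz_C x hx)]|->] //.
  by rewrite ci (P_sub hC).
by split=> [|x hx /(nz_C x hx) ->]; first exact: cardfs1.
Qed.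

Lemma B2_facet_of_B2_on : B2_on l P -> is_B2_facet tau.
Proof.
move=> [i [j [il jl ij hall]]]; exists i, j; split=> // x hx.
have [->|nxQ] := eqVneq x Q; first by rewrite !Q_off.
by case: (hall x (in_P hx nxQ)) => [[-> ->]|[[-> ->]|[-> ->]]].
Qed.

Lemma flat_border_of_flat_on : flat_on l P -> is_flat_border tau.
Proof.
move=> [i [j [C [D [[il [jl ij]] [[hC [ci cj]] [[hD [di dj]] hall]]]]]]].
exists i, j, C; split=> //; first exact: P_sub.
  have : [fset D; Q] `<=` [fset x in tau | (coord x i == 0%N) && (coord x j == 0%N)].
    apply/fsubsetP => x; rewrite !inE => /orP[] /eqP ->.
      by rewrite (P_sub hD) di dj.
    by rewrite Q_in !Q_off.
  by move/fsubset_leq_card; rewrite cardfs2 P_neqQ.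
move=> x hx nxC; have [->|nxQ] := eqVneq x Q; first by rewrite Q_off.
by case: (hall x (in_P hx nxQ) (elimN eqP nxC)) => ->; rewrite ?eqxx ?orbT.
Qed.

Lemma facet_trichotomy : is_B1_facet tau \/ is_B2_facet tau \/ is_flat_border tau.
Proof.
have [[X [Y [Z [hX hY hZ hi [xl yl zl ql]]]]] | no_flat_l] := classic (exists X Y Z,
    [/\ X \in P, Y \in P, Z \in P, lin_indep l X Y Z &
        [/\ coord X l = 0%N, coord Y l = 0%N, coord Z l = 0%N & coord Q l = 1%N]]).
  by left; apply: (B1_facet_of_flat_l hX hY hZ hi).
have pattern X Y Z : X \in P -> Y \in P -> Z \in P -> lin_indep l X Y Z ->
    exists i, i != l /\ unit_pattern i X Y Z.
  move=> hX hY hZ hi; case: (facet_lin_indep_pattern hX hY hZ hi) => // flat_l.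
  by case: no_flat_l; exists X, Y, Z.
have span X Y Z : X \in P -> Y \in P -> Z \in P -> lin_indep l X Y Z ->
    forall W, W \in P -> exists al be ga : rat, al + be + ga = 1 /\
      forall i, i != l -> coordQ W i = al * coordQ X i + be * coordQ Y i + ga * coordQ Z i.
  move=> hX hY hZ hi W hW; have [al [be [ga [s e]]]] := facet_lin_indep_span hX hY hZ hi hW.
  by exists al, be, ga; split=> // i _.
have [B1|[B2|flat]] := B_type_holds facet_lin_rel_sum0 facet_proj_inj span pattern
  facet_lin_indep_triple facet_coord_cover.
- by left; apply: B1_facet_of_B1_on.
- by right; left; apply: B2_facet_of_B2_on.
- by right; right; apply: flat_border_of_flat_on.
Qed.

End Facet.

Lemma nnz_eq1 n (x : pt n) : nnz x = 1%N ->
  exists l, coord x l <> 0%N /\ forall i, i != l -> coord x i = 0%N.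
Proof.
rewrite /nnz => /eqP /cards1P [l hl]; exists l.
have supp i : (coord x i != 0%N) = (i == l) by rewrite -in_set1 -hl inE.
split=> [|i /negbTE]; first by apply/eqP; rewrite supp.
by rewrite -supp => /negbFE /eqP.
Qed.

Local Close Scope ring_scope.

Theorem lemma2p9 (tau : {fset pt 4}) (Q : pt 4) :
  is_B_facet tau -> Q \in tau -> nnz Q = 1%N -> affdim (tau `\ Q) = 2%N ->
  is_B1_facet tau \/ is_B2_facet tau \/ is_flat_border tau.
Proof.
move=> [[a [b [a_gt0 span_tau]]] B_simplices] Q_in nnzQ affdim_P.
have [l [Q_l Q_off]] := nnz_eq1 nnzQ.
exact: (facet_trichotomy Q_in Q_l Q_off a_gt0 span_tau affdim_P B_simplices).
Qed.
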